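(* Let $n\ge2$, $A\in\mathbb{R}^{n\times n}$, $C\in\mathbb{R}^{1\times n}$ with $(C,A)$ observable, i.e. $\operatorname{rank}[C^T\ A^TC^T\ \cdots\ (A^{n-1})^TC^T]=n$. For a matrix $M\in\mathbb{R}^{r\times n}$ let $\mathrm{nul}(M)$ denote any $n\times d$ matrix whose columns span $\mathcal{N}(M)$, where $d=\dim\mathcal{N}(M)$. Define $X_0:=\mathrm{nul}(C)$ and, for $i=1,\ldots,n-2$, $X_i:=\mathrm{nul}\!\left(\begin{bmatrix} C\\ \mathrm{nul}((AX_{i-1})^T)^T\end{bmatrix}\right)$. Let $L_{\rm pre}:=AX_{n-2}$. Then $L_{\rm pre}$ is a nonzero vector in $\mathbb{R}^n$ (a single column) with $CL_{\rm pre}\neq0$, and $L:=AL_{\rm pre}/(CL_{\rm pre})\in\mathbb{R}^{n\times1}$ makes $A-LC$ nilpotent.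
   Context: $\mathcal{N}(M)$ denotes the null space of $M$. When $\mathcal{N}(M)=\{0\}$ the matrix $\mathrm{nul}(M)$ has zero columns. *)

From HB Require Import structures.
From mathcomp Require Import all_boot all_order all_algebra.
Set Implicit Arguments. Unset Strict Implicit. Unset Printing Implicit Defensive.
Import Order.TTheory GRing.Theory Num.Theory.
Local Open Scope ring_scope.

(* Null space N(M) of M : 'M_(r,n) = { v : 'cV_n | M *m v = 0 }.
   Row-vector view: v^T *m M^T = 0, i.e. v^T lies in the row space of
   kermx M^T.  [is_nul M N] : the columns of N : 'M_(n,d) span N(M) and
   d = dim N(M). *)
Definition is_nul (R : fieldType) (r n d : nat) (M : 'M[R]_(r, n)) (N : 'M[R]_(n, d)) : Prop :=
  d = \rank (kermx M^T) /\ (N^T == kermx M^T)%MS.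

Definition obsmx (R : fieldType) (n : nat) (A : 'M[R]_n) (C : 'M[R]_(1, n)) : 'M[R]_n :=
  \matrix_(k < n, i < n) (((A ^+ i)^T *m C^T) k 0).

Definition mx_nilpotent (R : fieldType) (n : nat) (M : 'M[R]_n) : Prop :=
  exists k : nat, M ^+ k = 0.

From HB Require Import structures.
From mathcomp Require Import all_boot all_order all_algebra.
From mathcomp Require Import zify.
(* Let N_i be the space of vectors z with C A^j z = 0 for all j <= i.  By
   induction the columns of X_i span A^i N_i: the constraint through Y_i
   places v in A (span X_i) = A^(i+1) N_i, and the constraint through C adds
   C v = 0.  Observability makes N_(n-2) a line on which A^(n-2) is injective,
   so X_(n-2) is a single column A^(n-2) z with C A^(n-1) z <> 0, and
   L_pre = A^(n-1) z.  The matrix F = A - L C shifts A^k z to A^(k+1) z for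
   k < n-1 and kills A^(n-1) z.  As C F^k z vanishes except at k = n-1, the
   Krylov vectors z, F z, ..., F^(n-1) z are independent, hence a basis that
   F^n annihilates. *)

Set Implicit Arguments.
Unset Strict Implicit.
Unset Printing Implicit Defensive.
Import Order.TTheory GRing.Theory Num.Theory.
Local Open Scope ring_scope.

Section NullSpaces.

Variable F : fieldType.

Lemma eqmx_rVP (m1 m2 n : nat) (P : 'M[F]_(m1, n)) (Q : 'M[F]_(m2, n)) :
  (forall v : 'rV_n, (v <= P)%MS = (v <= Q)%MS) -> (P == Q)%MS.
Proof. by move=> PQ; apply/andP; split; apply/rV_subP => v; rewrite PQ. Qed.

Lemma mx11_eq0 (a : 'M[F]_1) : (a == 0) = (a 0 0 == 0).
Proof.
apply/eqP/eqP => [-> | a0]; first by rewrite mxE.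
by apply/rowP => i; rewrite ord1 a0 mxE.
Qed.

Lemma row_free_row_neq0 (m n : nat) (M : 'M[F]_(m, n)) (i : 'I_m) :
  row_free M -> row i M != 0.
Proof.
move=> freeM; rewrite rowE mulmx_free_eq0 //.
by apply/eqP => /matrixP/(_ 0 i)/eqP; rewrite !mxE !eqxx oner_eq0.
Qed.

Lemma submxMP (m n p : nat) (K : 'M[F]_(m, n)) (M : 'M[F]_(n, p)) (v : 'rV_p) :
  reflect (exists2 y : 'rV_n, (y <= K)%MS & v = y *m M) (v <= K *m M)%MS.
Proof.
apply: (iffP idP) => [/submxP[w ->] | [y yK ->]]; last exact: submxMr.
by exists (w *m K); rewrite ?submxMl ?mulmxA.
Qed.

Lemma kermx_tr_kermx (n d : nat) (G : 'M[F]_(n, d)) :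
  (kermx (kermx G)^T :=: G^T)%MS.
Proof.
have sGK : (G^T <= kermx (kermx G)^T)%MS.
  by apply/sub_kermxP; rewrite -trmx_mul mulmx_ker trmx0.
apply/eqmxP/andP; split => //.
rewrite -(mxrank_leqif_sup sGK).2 mxrank_ker !mxrank_tr mxrank_ker.
by rewrite subKn ?rank_leq_row.
Qed.

Lemma is_nul_sub (r n d : nat) (M : 'M[F]_(r, n)) (N : 'M[F]_(n, d))
    (v : 'rV_n) :
  is_nul M N -> (v <= N^T)%MS = (v *m M^T == 0).
Proof. by case=> _ /eqmxP ->; rewrite sub_kermx. Qed.

Lemma is_nul_rank (r n d : nat) (M : 'M[F]_(r, n)) (N : 'M[F]_(n, d)) :
  is_nul M N -> d = \rank N^T.
Proof. by case=> rkN /eqmx_rank ->. Qed.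

Lemma eqmx_mul_tr_eq0 (m1 m2 n : nat) (P : 'M[F]_(m1, n)) (Q : 'M[F]_(m2, n))
    (v : 'rV_n) :
  (P :=: Q)%MS -> (v *m P^T == 0) = (v *m Q^T == 0).
Proof.
move=> eqPQ; rewrite -[v *m P^T == 0]trmx_eq0 -[v *m Q^T == 0]trmx_eq0.
by rewrite !trmx_mul !trmxK -!sub_kermx eqPQ.
Qed.

Lemma is_nul_tr_mul_eq0 (n d e : nat) (G : 'M[F]_(n, d)) (Y : 'M[F]_(n, e))
    (v : 'rV_n) :
  is_nul G^T Y -> (v *m Y == 0) = (v <= G^T)%MS.
Proof.
case=> _; rewrite trmxK => /eqmxP eqY.
by rewrite -(kermx_tr_kermx G) sub_kermx -(eqmx_mul_tr_eq0 _ eqY) trmxK.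
Qed.

Lemma is_nul_col_mx (k n e d : nat) (C : 'M[F]_(k, n)) (Y : 'M[F]_(n, e))
    (X : 'M[F]_(n, d)) (v : 'rV_n) :
  is_nul (col_mx C Y^T) X -> (v <= X^T)%MS = (v *m C^T == 0) && (v *m Y == 0).
Proof.
by move/is_nul_sub->; rewrite tr_col_mx trmxK mul_mx_row row_mx_eq0.
Qed.

End NullSpaces.

Section Observability.

Variables (R : fieldType) (n : nat) (A : 'M[R]_n) (C : 'M[R]_(1, n)).

Definition obscol (j : nat) : 'cV[R]_n := (A ^+ j)^T *m C^T.

(* Rows y of [kermx (obsmx_upto i)] are the transposes of the vectors of N_i. *)
Definition obsmx_upto (i : nat) : 'M[R]_(n, i.+1) :=
  \matrix_(k < n, j < i.+1) obscol j k 0.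

Lemma obsmx_upto0 : obsmx_upto 0 = C^T.
Proof.
by apply/matrixP => k j; rewrite ord1 mxE /obscol expr0 trmx1 mul1mx.
Qed.

Lemma tr_mul_obscol (y : 'rV[R]_n) (j : nat) :
  (y *m obscol j)^T = C *m (A ^+ j *m y^T).
Proof. by rewrite /obscol mulmxA !trmx_mul !trmxK mulmxA. Qed.

Lemma obscolD (i j : nat) : obscol (j + i) = (A ^+ i)^T *m obscol j.
Proof.
by rewrite /obscol mulmxA; congr (_ *m _); rewrite -trmx_mul mulmxE -exprD.
Qed.

Lemma sub_kermx_obsmx_upto (i : nat) (y : 'rV[R]_n) :
  (y <= kermx (obsmx_upto i))%MS <-> forall j, (j <= i)%N -> y *m obscol j = 0.
Proof.
have entry (j : 'I_i.+1) : (y *m obsmx_upto i) 0 j = (y *m obscol j) 0 0.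
  by rewrite !mxE; apply: eq_bigr => k _; rewrite mxE.
split => [/sub_kermxP yO j le_ji | yO].
  apply/rowP => l; have /= := entry (Ordinal (le_ji : (j < i.+1)%N)).
  by rewrite yO ord1 => <-; rewrite !mxE.
by apply/sub_kermxP/rowP => j; rewrite entry yO ?mxE // -ltnS.
Qed.

Lemma sub_kermx_obsmx_uptoS (i : nat) (y : 'rV[R]_n) :
  (y <= kermx (obsmx_upto i.+1))%MS =
  (y <= kermx (obsmx_upto i))%MS && (y *m obscol i.+1 == 0).
Proof.
apply/idP/andP => [yK | [yK /eqP yi]].
  move/sub_kermx_obsmx_upto: yK => yO; split; last exact/eqP/yO.
  by apply/sub_kermx_obsmx_upto => j le_ji; apply/yO/leqW.
move/sub_kermx_obsmx_upto: yK => yO; apply/sub_kermx_obsmx_upto => j.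
by rewrite leq_eqVlt ltnS => /orP[/eqP -> // | /yO].
Qed.

Hypothesis obs : \rank (obsmx A C) = n.

Lemma obs_orthogonal_eq0 (y : 'rV[R]_n) :
  (forall j, (j < n)%N -> y *m obscol j = 0) -> y = 0.
Proof.
have free_obs : row_free (obsmx A C) by rewrite /row_free obs.
move=> yO; apply/eqP; rewrite -(mulmx_free_eq0 _ free_obs).
apply/eqP/rowP => j; transitivity ((y *m obscol j) 0 0).
  by rewrite !mxE; apply: eq_bigr => k _; rewrite mxE.
by rewrite yO ?mxE.
Qed.

Lemma kermx_obsmx_upto_eq0 (i : nat) (y : 'rV[R]_n) :
  (n <= i.+1)%N -> (y <= kermx (obsmx_upto i))%MS -> y = 0.
Proof.
move=> le_ni /sub_kermx_obsmx_upto yO; apply: obs_orthogonal_eq0 => j lt_jn.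
by apply: yO; rewrite -ltnS (leq_trans lt_jn le_ni).
Qed.

Lemma mxrank_kermx_obsmx_upto_pow (i : nat) :
  \rank (kermx (obsmx_upto i) *m (A ^+ i)^T) = \rank (kermx (obsmx_upto i)).
Proof.
apply/mxrank_injP/rowV0P => y.
rewrite sub_capmx => /andP[/sub_kermx_obsmx_upto yO /sub_kermxP yAi].
apply: obs_orthogonal_eq0 => j _; have [/yO // | lt_ij] := leqP j i.
by rewrite -(subnK (ltnW lt_ij)) obscolD mulmxA yAi mul0mx.
Qed.

Lemma rank_kermx_obsmx_upto (i : nat) :
  i.+2 = n -> \rank (kermx (obsmx_upto i)) = 1%N.
Proof.
move=> def_n; set K := kermx (obsmx_upto i); set L := kermx (obscol i.+1).
have KL0 : (K :&: L)%MS = 0.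
  apply/eqP/rowV0P => y; rewrite sub_capmx => /andP[yK /sub_kermxP yL].
  apply: (@kermx_obsmx_upto_eq0 i.+1); first by rewrite def_n.
  by rewrite sub_kermx_obsmx_uptoS yK yL eqxx.
have := mxrank_sum_cap K L; rewrite KL0 mxrank0 addn0.
have := rank_leq_col (K + L)%MS; have := rank_leq_col (obscol i.+1).
have := rank_leq_col (obsmx_upto i).
rewrite /K /L !mxrank_ker; lia.
Qed.

End Observability.

Section NullSpaceIteration.

Variables (R : fieldType) (n : nat) (A : 'M[R]_n) (C : 'M[R]_(1, n)).
Variables (d : nat -> nat) (X : forall i : nat, 'M[R]_(n, d i)).
Variables (e : nat -> nat) (Y : forall i : nat, 'M[R]_(n, e i)).
Hypothesis nul_X0 : is_nul C (X 0%N).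
Hypothesis nul_Y :
  forall i : nat, (1 <= i <= n - 2)%N -> is_nul ((A *m X i.-1)^T) (Y i).
Hypothesis nul_X :
  forall i : nat, (1 <= i <= n - 2)%N -> is_nul (col_mx C (Y i)^T) (X i).

Lemma nul_iter_eqmx (i : nat) : (i <= n - 2)%N ->
  ((X i)^T == kermx (obsmx_upto A C i) *m (A ^+ i)^T)%MS.
Proof.
elim: i => [_ | i IHi lt_in].
  apply: eqmx_rVP => v.
  by rewrite expr0 trmx1 mulmx1 (is_nul_sub _ nul_X0) obsmx_upto0 sub_kermx.
have le_1i : (1 <= i.+1 <= n - 2)%N by [].
apply: eqmx_rVP => v.
rewrite (is_nul_col_mx _ (nul_X le_1i)) (is_nul_tr_mul_eq0 _ (nul_Y le_1i)) /=.
rewrite trmx_mul (eqmxMr _ (eqmxP (IHi (ltnW lt_in)))) -mulmxA -trmx_mul.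
rewrite mulmxE -exprS; apply/andP/submxMP => [[vC /submxMP[y yK def_v]] | [y]].
  exists y => //; rewrite sub_kermx_obsmx_uptoS yK.
  by rewrite def_v -mulmxA in vC.
rewrite sub_kermx_obsmx_uptoS => /andP[yK yC] ->; split.
  by rewrite -mulmxA.
by apply/submxMP; exists y.
Qed.

Lemma nul_iter_rank (i : nat) : (i <= n - 2)%N -> d i = \rank (X i)^T.
Proof.
case: i => [_ | i le_in]; first exact: is_nul_rank nul_X0.
by apply: is_nul_rank (nul_X _); rewrite le_in.
Qed.

Lemma nul_iter_col (i : nat) (j : 'I_(d i)) : (i <= n - 2)%N ->
  exists2 y : 'rV[R]_n, (y <= kermx (obsmx_upto A C i))%MS && (y != 0)
                      & col j (X i) = A ^+ i *m y^T.
Proof.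
move=> le_in; have /submxMP[y yK def_xT] :
    ((col j (X i))^T <= kermx (obsmx_upto A C i) *m (A ^+ i)^T)%MS.
  by rewrite tr_col -(eqmxP (nul_iter_eqmx le_in)) row_sub.
exists y; last by rewrite -[col _ _]trmxK def_xT trmx_mul trmxK.
rewrite yK; apply: contraTneq (row_free_row_neq0 j (_ : row_free (X i)^T)).
  by move=> y0; rewrite -tr_col def_xT y0 mul0mx eqxx.
by rewrite /row_free -nul_iter_rank.
Qed.

Hypothesis obs : \rank (obsmx A C) = n.

Lemma nul_iter_dim_last : (2 <= n)%N -> d (n - 2) = 1%N.
Proof.
move=> le_2n; rewrite (nul_iter_rank (leqnn _)).
rewrite (eqmx_rank (nul_iter_eqmx (leqnn _))) mxrank_kermx_obsmx_upto_pow //.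
by rewrite rank_kermx_obsmx_upto //; lia.
Qed.

End NullSpaceIteration.

Section Deadbeat.

Variables (R : fieldType) (n : nat) (A : 'M[R]_n.+1) (C : 'M[R]_(1, n.+1)).
Variable z : 'cV[R]_n.+1.
Hypothesis CApow_z : forall k, (k < n)%N -> C *m (A ^+ k *m z) = 0.

Let g := (C *m (A ^+ n *m z)) 0 0.
Hypothesis g_neq0 : g != 0.

Let F := A - (g^-1 *: (A *m (A ^+ n *m z))) *m C.

Lemma deadbeat_pow_z (k : nat) : (k <= n)%N -> F ^+ k *m z = A ^+ k *m z.
Proof.
elim: k => [|k IHk lt_kn]; first by rewrite !expr0.
rewrite exprS -mulmxE -mulmxA IHk 1?ltnW // /F mulmxBl -mulmxA CApow_z //.
by rewrite mulmx0 subr0 mulmxA mulmxE -exprS.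
Qed.

Lemma deadbeat_pow_z_eq0 (k : nat) : (n < k)%N -> F ^+ k *m z = 0.
Proof.
move=> lt_nk; rewrite -(subnK lt_nk) exprD -mulmxE -mulmxA exprS -mulmxE.
rewrite -mulmxA deadbeat_pow_z // /F mulmxBl -mulmxA [C *m _]mx11_scalar -/g.
by rewrite mul_mx_scalar scalerA mulfV // scale1r subrr mulmx0.
Qed.

Lemma C_deadbeat_pow_z (k : nat) :
  (C *m (F ^+ k *m z)) 0 0 = if k == n then g else 0.
Proof.
case: ltngtP => [lt_kn | lt_nk | ->]; last by rewrite deadbeat_pow_z.
  by rewrite deadbeat_pow_z 1?ltnW // CApow_z // mxE.
by rewrite deadbeat_pow_z_eq0 // mulmx0 mxE.
Qed.

Definition deadbeat_krylov : 'M[R]_n.+1 := \matrix_(k < n.+1) (F ^+ k *m z)^T.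

Lemma deadbeat_krylov_free : row_free deadbeat_krylov.
Proof.
apply: inj_row_free => u uK0; apply/rowP => j; rewrite mxE.
have pair (p : nat) : (u *m deadbeat_krylov *m (C *m F ^+ p)^T) 0 0 =
    \sum_k u 0 k * (if (p + k == n)%N then g else 0).
  rewrite -mulmxA mxE; apply: eq_bigr => k _; congr (_ * _).
  transitivity ((row k (deadbeat_krylov *m (C *m F ^+ p)^T)) 0 0).
    by rewrite [RHS]mxE.
  rewrite row_mul rowK -trmx_mul mxE -mulmxA [F ^+ p *m _]mulmxA mulmxE -exprD.
  exact: C_deadbeat_pow_z.
have := pair (n - j)%N; rewrite uK0 mul0mx mxE (bigD1 j) //= big1 => [|k ne_kj].
  rewrite subnK -1?ltnS // eqxx addr0 => /esym /eqP.
  by rewrite mulf_eq0 (negbTE g_neq0) orbF => /eqP.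
have lt_jn := ltn_ord j; have lt_kn := ltn_ord k.
move: ne_kj; rewrite -val_eqE /= => ne_kj.
by rewrite ifF ?mulr0 //; lia.
Qed.

Lemma deadbeat_nilpotent : F ^+ n.+1 = 0.
Proof.
have Ku : deadbeat_krylov \in unitmx.
  by rewrite -row_free_unit deadbeat_krylov_free.
have KF0 : deadbeat_krylov *m (F ^+ n.+1)^T = 0.
  apply/row_matrixP => k; rewrite row_mul rowK -trmx_mul row0.
  rewrite mulmxA mulmxE -exprD addnC exprD -mulmxE -mulmxA.
  by rewrite deadbeat_pow_z_eq0 // mulmx0 trmx0.
by apply: trmx_inj; rewrite -(mulKmx Ku (F ^+ n.+1)^T) KF0 mulmx0 trmx0.
Qed.

End Deadbeat.

Theorem mainTheorem10 (R : realFieldType) (n : nat) (hn : (2 <= n)%N)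
  (A : 'M[R]_n) (C : 'M[R]_(1, n))
  (hobs : \rank (obsmx A C) = n)
  (d : nat -> nat) (X : forall i : nat, 'M[R]_(n, d i))
  (e : nat -> nat) (Y : forall i : nat, 'M[R]_(n, e i))
  (hX0 : is_nul C (X 0%N))
  (hY : forall i : nat, (1 <= i <= n - 2)%N -> is_nul ((A *m X i.-1)^T) (Y i))
  (hX : forall i : nat, (1 <= i <= n - 2)%N -> is_nul (col_mx C (Y i)^T) (X i)) :
  d (n - 2)%N = 1%N /\
  forall j : 'I_(d (n - 2)%N),
    let Lpre : 'cV[R]_n := col j (A *m X (n - 2)%N) in
    Lpre != 0 /\ (C *m Lpre) 0 0 != 0 /\
    mx_nilpotent (A - (((C *m Lpre) 0 0)^-1 *: (A *m Lpre)) *m C).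
Proof.
move: (nul_iter_col hX0 hY hX (i := (n - 2)%N)).
move: (nul_iter_dim_last hX0 hY hX hobs hn).
(* The Deadbeat section works with matrices of size _.+1. *)
have [m def_n] : exists m, n = m.+2 by exists (n - 2)%N; lia.
subst n; have -> : (m.+2 - 2 = m)%N by rewrite subn2.
move=> dim1 col_X; split => // j Lpre.
have [y /andP[yK y_neq0] def_x] := col_X j (leqnn m).
have def_L : Lpre = A ^+ m.+1 *m y^T.
  by rewrite /Lpre colE -mulmxA -colE def_x mulmxA mulmxE -exprS.
have /sub_kermx_obsmx_upto yO := yK.
have CApow_y k : (k < m.+1)%N -> C *m (A ^+ k *m y^T) = 0.
  by move=> lt_km; rewrite -tr_mul_obscol yO ?trmx0.
have g_neq0 : (C *m Lpre) 0 0 != 0.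
  rewrite def_L -tr_mul_obscol mxE; apply: contra y_neq0 => g0; apply/eqP.
  apply: (kermx_obsmx_upto_eq0 hobs (i := m.+1)) => //.
  by rewrite sub_kermx_obsmx_uptoS yK mx11_eq0.
split; first by apply: contraNneq g_neq0 => ->; rewrite mulmx0 mxE.
split => //; exists m.+2; rewrite def_L in g_neq0 *.
exact: deadbeat_nilpotent.
Qed.
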